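(* Fix $\alpha\in(1/2,1)$. Then for every $n\ge 0$ and every rooted tree $T$ on $n$ nodes, the tree $U_n$ defined below contains a subgraph isomorphic to a subdivision of $T$. Equivalently, there is an injective map $f$ from the nodes of $T$ to the nodes of $U_n$ with $f(\mathsf{NCA}(u,v))=\mathsf{NCA}(f(u),f(v))$ for all $u,v$. Definition of $a_N$: for integers $N\ge0$, $a_0$ is the empty sequence, $a_1=(1)$, and for $N\ge 2$, $a_N=a_{\lfloor N/2\rfloor}\oplus(N)\oplus a_{\lfloor N/2\rfloor}$, where $\oplus$ denotes concatenation. Definition of $U_n$: $U_0$ is the empty tree and $U_1$ is a single node. For $n\ge2$, let $N=\lfloor(1-\alpha)n\rfloor$ and $a_N=(a(1),\dots,a(k))$. Then $U_n$ consists of a path $u_1-\dots-u_{k+1}$ rooted at $u_1$, with the following subtrees attached: - for each $i=1,\dots,k$, a copy of $U_{a(i)-1}$ and, for every integer $j\ge 2$, a copy of $U_{\lfloor a(i)/j\rfloor}$, all attached to $u_i$; - a copy of $U_{\lfloor\alpha n\rfloor}$ and, for every integer $j\ge2$, a copy of $U_{\lfloor (n-1)/j\rfloor}$, all attached to $u_{k+1}$. Attaching a copy of a tree to a node means making its root a child of that node; copies of the empty tree add nothing.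
   Context: Trees are rooted and unordered, with edges directed from parent to child. The degree of a node is its number of children. $\mathsf{NCA}$ denotes the nearest common ancestor. *)

From mathcomp Require Import all_boot all_order all_algebra.
From mathcomp Require Import reals.
Set Implicit Arguments. Unset Strict Implicit. Unset Printing Implicit Defensive.
Import Order.TTheory GRing.Theory Num.Theory.

(* Rooted trees; the order of children is irrelevant for everything below. *)
Inductive tree := Node of seq tree.

Definition children (t : tree) : seq tree := let: Node cs := t in cs.

Fixpoint tsize (t : tree) : nat :=
  let: Node cs := t in (sumn (map tsize cs)).+1.

Definition otree := option tree.
Definition osize (t : otree) : nat := if t is Some t' then tsize t' else 0.

(* Nodes of a tree are addressed by paths from the root (sequences of child
   indices); [valid t p] says that p addresses a node of t. *)
Fixpoint valid (t : tree) (p : seq nat) : bool :=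
  if p is i :: p' then (i < size (children t))%N && valid (nth (Node [::]) (children t) i) p'
  else true.

Definition is_node (t : otree) (p : seq nat) : bool :=
  if t is Some t' then valid t' p else false.

(* Nearest common ancestor = longest common prefix of the addresses. *)
Fixpoint nca (p q : seq nat) : seq nat :=
  match p, q with
  | i :: p', j :: q' => if i == j then i :: nca p' q' else [::]
  | _, _ => [::]
  end.

Definition nca_embeds (T U : otree) : Prop :=
  exists f : seq nat -> seq nat,
    [/\ forall u, is_node T u -> is_node U (f u),
        {in is_node T &, injective f}
      & forall u v, is_node T u -> is_node T v -> f (nca u v) = nca (f u) (f v)].

(* The sequence a_N (fuel-based; fuel N suffices). *)
Fixpoint aseq_f (fuel N : nat) : seq nat :=
  match fuel with
  | 0 => if N == 1%N then [:: 1%N] else [::]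
  | fuel'.+1 =>
    if (N < 2)%N then (if N == 1%N then [:: 1%N] else [::])
    else aseq_f fuel' N./2 ++ N :: aseq_f fuel' N./2
  end.
Definition aseq (N : nat) : seq nat := aseq_f N N.

Definition somes (ts : seq otree) : seq tree := pmap id ts.

(* U_n, fuel-based: every recursive call is on a strictly smaller index when
   1/2 < alpha < 1, so fuel n.+1 suffices. *)
Fixpoint U_f {R : realType} (alpha : R) (fuel n : nat) : otree :=
  match fuel with
  | 0 => None
  | fuel'.+1 =>
    if n is 0 then None else
    if n is 1 then Some (Node [::]) else
    let rec := U_f alpha fuel' in
    let N := Num.truncn ((1 - alpha) * n%:R) in
    (* subtrees attached at the node carrying value ai: U_{ai-1}, U_{floor(ai/j)} for j>=2
       (for j > ai these are empty) *)
    let att ai := somes (rec ai.-1 :: [seq rec (ai %/ j)%N | j <- iota 2 ai.-1]) in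
    let last := Node (somes (rec (Num.truncn (alpha * n%:R))
                       :: [seq rec (n.-1 %/ j)%N | j <- iota 2 n])) in
    Some (foldr (fun ai sub => Node (sub :: att ai)) last (aseq N))
  end.

Definition U {R : realType} (alpha : R) (n : nat) : otree := U_f alpha n.+1 n.

(* Let K = floor(alpha n) and N = floor((1 - alpha) n), so that n <= K + N + 1.
   Starting at the root of T, repeatedly step into a child with more than K
   nodes; the weight of a node on this heavy path is its size minus the size of
   its heavy child.  The weights are positive with sum at most n - K - 1 <= N,
   and every such sequence is dominated termwise by a subsequence of a_N: cut it
   where its prefix sums first exceed floor(N/2) and place the two parts in the
   two copies of a_(floor(N/2)).  The heavy-path node of weight x <= a(i) goes to
   u_i and its heavy child continues down the path; its light children, listed
   by decreasing size c_0 >= c_1 >= ..., satisfy (m+1) c_m <= x - 1 < a(i), so by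
   induction they embed into U_(a(i)-1), U_(floor(a(i)/2)), U_(floor(a(i)/3)), ...
   The last heavy-path node goes to u_(k+1): its children have at most K nodes
   and total size below n, so the same ranking places them into U_K,
   U_(floor((n-1)/2)), U_(floor((n-1)/3)), ... *)

From Pilot Require Import Defs.
From mathcomp Require Import all_boot all_order all_algebra.
From mathcomp Require Import reals.
From mathcomp Require Import lra zify.
Import Order.TTheory GRing.Theory Num.Theory.
Set Implicit Arguments. Unset Strict Implicit. Unset Printing Implicit Defensive.

Local Notation tsize := Defs.tsize.
Local Notation leaf := (Node [::]).

Definition embeds (t : tree) (o : otree) := nca_embeds (Some t) o.

Lemma embeds_some t o : embeds t o -> exists u, o = Some u.
Proof.
case: o => [u|]; first by exists u.
by case=> f [/(_ [::] isT)].
Qed.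

Lemma embeds_child t u i : i < size (children u) ->
  embeds t (Some (nth leaf (children u) i)) -> embeds t (Some u).
Proof.
move=> i_lt [f [f_node f_inj f_nca]].
exists (fun p => i :: f p); split.
- by move=> p /f_node /= ->; rewrite i_lt.
- by move=> p q p_node q_node [] /f_inj; apply.
- by move=> p q p_node q_node; rewrite f_nca //= eqxx.
Qed.

Lemma bounded_choice (A : Type) (x0 : A) (n : nat) (P : nat -> A -> Prop) :
  (forall j, j < n -> exists x, P j x) ->
  exists F : nat -> A, forall j, j < n -> P j (F j).
Proof.
elim: n => [|n IH] H; first by exists (fun _ => x0).
have [F HF] := IH (fun j j_lt => H j (ltnW j_lt)).
have [x Hx] := H n (ltnSn n).
exists (fun j => if j == n then x else F j) => j; rewrite ltnS leq_eqVlt.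
by case: eqP => [->|_ /HF].
Qed.

Definition is_nca_map (t u : tree) (f : seq nat -> seq nat) :=
  [/\ forall p, valid t p -> valid u (f p), {in valid t &, injective f}
    & forall p q, valid t p -> valid t q -> f (nca p q) = nca (f p) (f q)].

Lemma embeds_node cs us (sigma : nat -> nat) :
  {in gtn (size cs) &, injective sigma} ->
  (forall j, j < size cs -> sigma j < size us /\
     embeds (nth leaf cs j) (Some (nth leaf us (sigma j)))) ->
  embeds (Node cs) (Some (Node us)).
Proof.
move=> sigma_inj sub_emb.
have [F HF] := @bounded_choice _ id (size cs) (fun j f =>
    sigma j < size us /\ is_nca_map (nth leaf cs j) (nth leaf us (sigma j)) f)
  ltac:(by move=> j /sub_emb [sigma_lt [f hf]]; exists f).
exists (fun p => if p is j :: q then sigma j :: F j q else [::]); split.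
- case=> [//|j q] /= /andP [j_lt q_node].
  by have [-> [F_node _ _]] := HF j j_lt; rewrite F_node.
- move=> [|j p] [|j' p'] //= /andP [j_lt p_node] /andP [j'_lt p'_node] [].
  move=> /sigma_inj-/(_ j_lt j'_lt) eq_jj'; subst j'.
  by have [_ [_ F_inj _]] := HF j j_lt; move=> /F_inj-/(_ p_node p'_node) ->.
- move=> [|j p] [|j' p'] //= /andP [j_lt p_node] /andP [j'_lt p'_node].
  have [eq_jj'|j_neq] := eqVneq j j'.
    subst j'; have [_ [_ _ F_nca]] := HF j j_lt.
    by rewrite eqxx F_nca.
  by case: eqP => // /sigma_inj-/(_ j_lt j'_lt) /eqP; rewrite (negPf j_neq).
Qed.

Lemma nth_somes (ots : seq otree) k u : nth None ots k = Some u ->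
  size (somes (take k ots)) < size (somes ots) /\
  nth leaf (somes ots) (size (somes (take k ots))) = u.
Proof.
move=> ots_k; have k_lt : k < size ots.
  by rewrite ltnNge; apply/negP => /(nth_default None); rewrite ots_k.
have -> : somes ots = somes (take k ots) ++ u :: somes (drop k.+1 ots).
  by rewrite -{1}(cat_take_drop k ots) (drop_nth None k_lt) ots_k /somes pmap_cat.
by rewrite size_cat nth_cat ltnn subnn addnS ltnS leq_addr.
Qed.

Lemma size_somes_take_lt (ots : seq otree) k k' u :
  k < k' -> nth None ots k = Some u ->
  size (somes (take k ots)) < size (somes (take k' ots)).
Proof.
move=> lt_kk' ots_k; have k_lt : k < size ots.
  by rewrite ltnNge; apply/negP => /(nth_default None); rewrite ots_k.
rewrite -(subnKC lt_kk') takeD (take_nth None k_lt) ots_k -cats1 /somes !pmap_cat /=.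
by rewrite !size_cat /= addn1 leq_addr.
Qed.

Lemma embeds_somes cs (ots : seq otree) (tau : nat -> nat) :
  {in gtn (size cs) &, injective tau} ->
  (forall j, j < size cs -> embeds (nth leaf cs j) (nth None ots (tau j))) ->
  embeds (Node cs) (Some (Node (somes ots))).
Proof.
move=> tau_inj sub_emb.
have ots_tau j : j < size cs -> exists u, nth None ots (tau j) = Some u.
  by move/sub_emb/embeds_some.
apply: (@embeds_node _ _ (fun j => size (somes (take (tau j) ots)))).
- move=> j j' j_lt j'_lt /= eq_idx; apply: tau_inj => //.
  have [u ots_j] := ots_tau _ j_lt; have [u' ots_j'] := ots_tau _ j'_lt.
  case: (ltngtP (tau j) (tau j')) => // [lt|gt].
  + by have := size_somes_take_lt lt ots_j; rewrite eq_idx ltnn.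
  + by have := size_somes_take_lt gt ots_j'; rewrite eq_idx ltnn.
- move=> j j_lt; have [u ots_j] := ots_tau _ j_lt.
  have [idx_lt ->] := nth_somes ots_j.
  by split => //; rewrite -ots_j; apply: sub_emb.
Qed.

Section Ranking.

Variables (c : nat -> nat) (P : pred nat) (r : nat).

Definition precedes k j := (c j < c k) || ((c k == c j) && (k < j)).

Definition rank j := count (fun k => P k && precedes k j) (iota 0 r).

Lemma precedes_irr j : precedes j j = false.
Proof. by rewrite /precedes !ltnn andbF. Qed.

Lemma precedes_trans k j j' : precedes k j -> precedes j j' -> precedes k j'.
Proof. by rewrite /precedes; lia. Qed.

Lemma precedes_total j j' : j != j' -> precedes j j' || precedes j' j.
Proof. by rewrite /precedes; lia. Qed.

Lemma count_precedes_or_eq j : j < r -> P j ->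
  count (fun k => P k && (precedes k j || (k == j))) (iota 0 r) = (rank j).+1.
Proof.
move=> j_lt Pj.
have := count_predUI (fun k => P k && precedes k j) (pred1 j) (iota 0 r).
have -> : count (pred1 j) (iota 0 r) = 1.
  by rewrite (count_uniq_mem _ (iota_uniq 0 r)) mem_iota j_lt.
have -> : count (predI (fun k => P k && precedes k j) (pred1 j)) (iota 0 r) = 0.
  apply/eqP; rewrite -leqn0 leqNgt -has_count; apply/hasPn => k _ /=.
  by apply/negP => /andP [/andP [_]]; case: eqP => // ->; rewrite precedes_irr.
rewrite addn0 addn1 => <-; apply: eq_count => k /=.
by case: eqP => [->|_]; rewrite ?Pj ?orbT ?orbF.
Qed.

Lemma rank_inj : {in [pred j | (j < r) && P j] &, injective rank}.
Proof.
have rank_lt j j' : j < r -> P j -> precedes j j' -> rank j < rank j'.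
  move=> j_lt Pj prec; rewrite -count_precedes_or_eq //.
  apply: sub_count => k /= /andP [Pk /orP [prec_kj|/eqP ->]]; rewrite ?Pk ?Pj //=.
  exact: precedes_trans prec.
move=> j j' /andP [j_lt Pj] /andP [j'_lt Pj'] eq_rank; apply/eqP/negPn/negP.
case/precedes_total/orP=> [/(rank_lt _ _ j_lt Pj)|/(rank_lt _ _ j'_lt Pj')];
  by rewrite eq_rank ltnn.
Qed.

Lemma rank_bound j : j < r -> P j ->
  (rank j).+1 * c j <= \sum_(0 <= k < r | P k) c k.
Proof.
move=> j_lt Pj; rewrite -count_precedes_or_eq // mulnC -iter_addn_0.
rewrite -big_const_seq /index_iota subn0 big_mkcondr /=.
apply: leq_sum => k _; case: ifP => // /orP [|/eqP -> //].
by rewrite /precedes => /orP [/ltnW|/andP [/eqP -> _]].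
Qed.

End Ranking.

Inductive dominated : seq nat -> seq nat -> Prop :=
| dominated_nil xs : dominated [::] xs
| dominated_skip s a xs : dominated s xs -> dominated s (a :: xs)
| dominated_take x s a xs : x <= a -> dominated s xs -> dominated (x :: s) (a :: xs).

Lemma dominated_catl s xs ys : dominated s ys -> dominated s (xs ++ ys).
Proof. by elim: xs => //= a xs IH /IH; constructor. Qed.

Lemma dominated_catr s xs ys : dominated s xs -> dominated s (xs ++ ys).
Proof. by elim=> *; constructor. Qed.

Lemma dominated_cat s1 s2 xs ys :
  dominated s1 xs -> dominated s2 ys -> dominated (s1 ++ s2) (xs ++ ys).
Proof.
elim=> [xs0|s a xs0 _ IH|x s a xs0 x_le _ IH] dom2 /=.
- exact: dominated_catl.
- by constructor; apply: IH.
- by constructor => //; apply: IH.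
Qed.

Lemma split_at_prefix_sum K s : K < sumn s ->
  exists s1 x s2, [/\ s = s1 ++ x :: s2, sumn s1 <= K & K < sumn s1 + x].
Proof.
elim: s K => [|y s IH] K //= K_lt.
have [K_lt_y|y_le_K] := ltnP K y; first by exists [::], y, s.
have [s1 [x [s2 [-> sum1_le sum1_gt]]]] := IH (K - y) ltac:(lia).
by exists (y :: s1), x, s2; split => //=; lia.
Qed.

Lemma mem_aseq_f_le f N x : x \in aseq_f f N -> x <= N.
Proof.
elim: f N => [|f IH] N /=.
  by case: eqP => [->|]; rewrite ?inE // => /eqP ->.
case: ltnP => [_|N_ge2]; first by case: eqP => [->|]; rewrite ?inE // => /eqP ->.
rewrite mem_cat inE => /or3P [/IH|/eqP ->//|/IH] x_le;
  by rewrite -divn2 in x_le; apply: leq_trans x_le (leq_div _ _).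
Qed.

Lemma aseq_f_dominated f N s : N <= f -> all (fun x => 0 < x) s -> sumn s <= N ->
  dominated s (aseq_f f N).
Proof.
elim: f N s => [|f IH] N s N_le s_pos sum_le.
  move: N_le s_pos sum_le; rewrite leqn0 => /eqP ->.
  by case: s => [|[]] //; constructor.
rewrite /=; case: ltnP => [N_lt2|N_ge2].
  case: s s_pos sum_le => [|x [|y s]] /=; first by constructor.
  - move=> x_pos x_le; have -> : N = 1 by lia.
    by rewrite eqxx; constructor; [lia | constructor].
  - by lia.
have half_le : N./2 <= f.
  by rewrite -ltnS; apply: leq_trans N_le; rewrite -divn2 ltn_Pdiv //; lia.
have [sum_half|half_lt] := leqP (sumn s) N./2; first by apply/dominated_catr/IH.
have [s1 [x [s2 [eq_s sum1_le sum1_gt]]]] := split_at_prefix_sum half_lt.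
move: s_pos sum_le; rewrite eq_s all_cat sumn_cat /=.
move=> /and3P [s1_pos x_pos s2_pos] sum_le.
apply: dominated_cat; first exact: IH.
constructor; first lia.
apply: IH => //; rewrite -divn2 in sum1_gt *; have := leq_trunc_div N 2; lia.
Qed.

Lemma tsize_gt0 t : 0 < tsize t.
Proof. by case: t. Qed.

Lemma sum_tsize_nth cs :
  \sum_(0 <= k < size cs) tsize (nth leaf cs k) = sumn (map tsize cs).
Proof.
rewrite sumnE [RHS](big_nth 0) size_map !big_nat.
by apply: eq_bigr => k k_lt; rewrite (nth_map leaf).
Qed.

Lemma leq_sum_nat_cond (F : nat -> nat) (P : pred nat) r j : j < r -> P j ->
  F j <= \sum_(0 <= k < r | P k) F k.
Proof.
by move=> j_lt Pj; rewrite (big_rem j) ?Pj ?leq_addr // mem_iota; lia.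
Qed.

Lemma tsize_nth_le cs i : i < size cs -> tsize (nth leaf cs i) <= sumn (map tsize cs).
Proof.
by move=> i_lt; rewrite -sum_tsize_nth; apply: (leq_sum_nat_cond _ (P := xpredT)).
Qed.

Inductive heavy_path (K : nat) : tree -> seq nat -> Prop :=
| heavy_path_end cs :
    all (fun c => tsize c <= K) cs -> heavy_path K (Node cs) [::]
| heavy_path_step cs i s : i < size cs -> K < tsize (nth leaf cs i) ->
    heavy_path K (nth leaf cs i) s ->
    heavy_path K (Node cs) ((tsize (Node cs) - tsize (nth leaf cs i)) :: s).

Lemma heavy_path_exists K t : exists s, heavy_path K t s.
Proof.
elim: {t}(tsize t) {-2}t (leqnn (tsize t)) => [|m IH] [cs] size_le.
  by have := tsize_gt0 (Node cs); lia.
have [heavy|light] := boolP (has (fun c => K < tsize c) cs); last first.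
  exists [::]; constructor; move: light; rewrite -all_predC.
  by apply: sub_all => c /=; rewrite -leqNgt.
have i_lt := heavy; rewrite has_find in i_lt.
have [s hs] : exists s, heavy_path K (nth leaf cs (find (fun c => K < tsize c) cs)) s.
  by apply: IH; move: size_le (tsize_nth_le i_lt) => /=; lia.
by eexists; apply: (heavy_path_step i_lt (nth_find leaf heavy) hs).
Qed.

Lemma heavy_path_weights K t s : heavy_path K t s ->
  all (fun x => 0 < x) s /\ sumn s <= tsize t - K.+1.
Proof.
elim=> [//|cs i {}s i_lt heavy _ [s_pos sum_le]] /=.
have := tsize_nth_le i_lt; rewrite s_pos; lia.
Qed.

Lemma heavy_path_nil K t :
  heavy_path K t [::] -> all (fun c => tsize c <= K) (children t).
Proof. by move=> hp; case: t {-1}[::] / hp (erefl ([::] : seq nat)). Qed.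

Lemma heavy_path_cons K t x s : heavy_path K t (x :: s) ->
  exists2 i, i < size (children t) &
    [/\ K < tsize (nth leaf (children t) i), heavy_path K (nth leaf (children t) i) s
      & x = tsize t - tsize (nth leaf (children t) i)].
Proof.
move=> hp; case: t {-1}(x :: s) / hp (erefl (x :: s)) => // cs i s' i_lt heavy hp'.
by case=> -> ->; exists i.
Qed.

Section EmbeddingIntoU.

Variables (n : nat) (rec : nat -> otree).
Hypothesis rec_embeds : forall m, m < n -> forall t, tsize t <= m -> embeds t (rec m).

Definition fan b q L : seq otree := rec b :: [seq rec (q %/ j) | j <- iota 2 L].

Lemma embeds_fan b q L cs (P : pred nat) :
  b < n -> q <= n -> q.-1 <= L ->
  (forall j, j < size cs -> P j -> tsize (nth leaf cs j) <= b) ->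
  \sum_(0 <= k < size cs | P k) tsize (nth leaf cs k) <= q ->
  exists2 tau : nat -> nat, {in [pred j | (j < size cs) && P j] &, injective tau} &
    forall j, j < size cs -> P j ->
      embeds (nth leaf cs j) (nth None (fan b q L) (tau j)).
Proof.
move=> b_lt q_le q_L child_le sum_le.
pose c k := tsize (nth leaf cs k).
exists (rank c P (size cs)); first exact: rank_inj.
move=> j j_lt Pj; have := leq_trans (rank_bound c j_lt Pj) sum_le.
case: (rank c P (size cs) j) => [|m] bound /=; first exact/rec_embeds/child_le.
have c_gt0 : 0 < c j by apply: tsize_gt0.
have m_lt : m < L by nia.
rewrite (nth_map 0) ?size_iota // nth_iota // add2n.
apply: rec_embeds; first by apply: leq_trans (ltn_Pdiv _ _) q_le; nia.
by rewrite leq_divRL // mulnC.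
Qed.

Lemma embeds_spine_end K cs : K < n -> all (fun c => tsize c <= K) cs ->
  tsize (Node cs) <= n -> embeds (Node cs) (Some (Node (somes (fan K n.-1 n)))).
Proof.
move=> K_lt /(all_nthP leaf) light size_le.
have sum_le : \sum_(0 <= k < size cs | predT k) tsize (nth leaf cs k) <= n.-1.
  by rewrite sum_tsize_nth; move: size_le => /=; lia.
have [tau tau_inj tau_emb] := embeds_fan K_lt (leq_pred n)
  (leq_trans (leq_pred _) (leq_pred n)) (fun j j_lt _ => light j j_lt) sum_le.
apply: embeds_somes (fun j j_lt => tau_emb j j_lt isT).
by move=> j j' j_lt j'_lt; apply: tau_inj; rewrite inE andbT.
Qed.

Definition spine K xs := foldr (fun a sub => Node (sub :: somes (fan a.-1 a a.-1)))
  (Node (somes (fan K n.-1 n))) xs.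

Lemma embeds_heavy_node a cs i u : i < size cs -> a <= n ->
  tsize (Node cs) - tsize (nth leaf cs i) <= a -> embeds (nth leaf cs i) (Some u) ->
  embeds (Node cs) (Some (Node (u :: somes (fan a.-1 a a.-1)))).
Proof.
move=> i_lt a_le weight_le heavy_emb.
have light_sum : tsize (nth leaf cs i)
    + \sum_(0 <= k < size cs | k != i) tsize (nth leaf cs k) = sumn (map tsize cs).
  by rewrite -sum_tsize_nth (bigD1_seq i) ?iota_uniq // mem_iota; lia.
have light_sum_le : \sum_(0 <= k < size cs | k != i) tsize (nth leaf cs k) <= a.-1.
  by move: weight_le => /=; lia.
have light_le j : j < size cs -> j != i -> tsize (nth leaf cs j) <= a.-1.
  move=> j_lt j_neq; apply: leq_trans light_sum_le.
  exact: (leq_sum_nat_cond (fun k => tsize (nth leaf cs k)) (P := fun k => k != i)).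
have a_pred_lt : a.-1 < n.
  by move: weight_le (tsize_nth_le i_lt) => /=; lia.
have [tau tau_inj tau_emb] := embeds_fan a_pred_lt a_le (leqnn a.-1) light_le
  (leq_trans light_sum_le (leq_pred a)).
apply: (@embeds_somes cs (Some u :: fan a.-1 a a.-1)
          (fun j => if j == i then 0 else (tau j).+1)).
- move=> j j' j_lt j'_lt /=.
  case: eqP => [->|/eqP j_neq]; case: eqP => [->|/eqP j'_neq] //= [].
  by apply: tau_inj; rewrite inE ?j_neq ?j'_neq andbT.
by move=> j j_lt; case: eqP => [->|/eqP j_neq] //=; apply: tau_emb.
Qed.

Lemma embeds_spine K s xs t : K < n -> dominated s xs -> all (fun a => a <= n) xs ->
  heavy_path K t s -> tsize t <= n -> embeds t (Some (spine K xs)).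
Proof.
move=> K_lt dom; elim: dom t => [xs0|s0 a xs0 _ IH|x s0 a xs0 x_le _ IH] [cs].
- move=> xs_le /heavy_path_nil /= light size_le.
  elim: xs0 xs_le => [_|a xs0 IHxs /andP [_ /IHxs]]; first exact: embeds_spine_end.
  by move=> emb_xs0; apply: (@embeds_child _ _ 0).
- case/andP=> _ xs_le hp size_le.
  by apply: (@embeds_child _ _ 0) => //=; apply: IH.
case/andP=> a_le xs_le /heavy_path_cons /= [i i_lt [_ hp eq_x]] size_le.
apply: (embeds_heavy_node i_lt a_le); first by rewrite -eq_x.
by apply: IH => //; move: size_le (tsize_nth_le i_lt) => /=; lia.
Qed.

End EmbeddingIntoU.

Lemma truncn_split_bounds (R : realType) (alpha : R) (n : nat) :
  (2^-1 < alpha)%R -> (alpha < 1)%R -> (0 < n)%N ->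
  [/\ (Num.truncn (alpha * n%:R) < n)%N,
      (Num.truncn ((1 - alpha) * n%:R) <= n)%N &
      (n <= Num.truncn (alpha * n%:R) + Num.truncn ((1 - alpha) * n%:R) + 1)%N].
Proof.
move=> alpha_gt alpha_lt n_gt0.
have n_gt0R : (0 < n%:R :> R)%R by rewrite ltr0n.
have half_gt0 : (0 < (2:R)^-1)%R by rewrite invr_gt0.
split.
- by rewrite truncn_lt_nat; [nra | apply: mulr_ge0 => //; lra].
- by rewrite truncn_le_nat -natr1; nra.
- have gtK := truncnS_gt (alpha * n%:R).
  have gtN := truncnS_gt ((1 - alpha) * n%:R).
  suff : (n < (Num.truncn (alpha * n%:R)).+1 + (Num.truncn ((1 - alpha) * n%:R)).+1)%N
    by lia.
  by rewrite -(ltr_nat R) natrD; lra.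
Qed.

Lemma embeds_U_f (R : realType) (alpha : R) : (2^-1 < alpha)%R -> (alpha < 1)%R ->
  forall f n, n < f -> forall t, tsize t <= n -> embeds t (U_f alpha f n).
Proof.
move=> alpha_gt alpha_lt; elim=> [//|f IH] [|[|n]] n_lt t size_le.
- by have := tsize_gt0 t; lia.
- case: t size_le => [[|c cs]] /= size_le; last by have := tsize_gt0 c; lia.
  exact: (@embeds_node [::] [::] id).
have [K_lt N_le n_le] := truncn_split_bounds alpha_gt alpha_lt (ltn0Sn n.+1).
set K := Num.truncn (alpha * n.+2%:R) in K_lt n_le *.
set N := Num.truncn ((1 - alpha) * n.+2%:R) in N_le n_le *.
have [s hp] := heavy_path_exists K t.
have [s_pos sum_le] := heavy_path_weights hp.
have dom : dominated s (aseq N) by apply: aseq_f_dominated => //; lia.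
have xs_le : all (fun a => a <= n.+2) (aseq N).
  by apply/allP => a /mem_aseq_f_le; lia.
have rec_embeds m : m < n.+2 -> forall t, tsize t <= m -> embeds t (U_f alpha f m).
  by move=> m_lt; apply: IH; lia.
(* [U_f alpha f.+1 n.+2] unfolds to [spine n.+2 (U_f alpha f) K (aseq N)]. *)
exact: (embeds_spine rec_embeds K_lt dom xs_le hp size_le).
Qed.

Unset Implicit Arguments.

Theorem lemma3 (R : realType) (alpha : R) :
  (2^-1 < alpha)%R -> (alpha < 1)%R ->
  forall (n : nat) (T : otree), osize T = n -> nca_embeds T (U alpha n).
Proof.
move=> alpha_gt alpha_lt n [t <-|_]; last by exists id; split.
exact: embeds_U_f alpha_gt alpha_lt _ _ (ltnSn _) t (leqnn _).
Qed.
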